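(* Every $y=(y^1,y^2,y^3)\in\mathbb T^3$ such that $y^i\in\{0,\tfrac12\}$ (mod 1) for some $i\in\{1,2,3\}$ belongs to the no-collision region $\mathfrak I$.
   Context: $\mathbb{T}=\mathbb R/\mathbb Z$, $\mathbb{T}^3=\mathbb{R}^3/\mathbb{Z}^3$; $\omega(k)=\omega_0+\sum_{j=1}^3 2(1-\cos(2\pi k^j))$ with fixed $2<\omega_0<3$. Two wave vectors $x,y\in\mathbb{T}^3$ are connected by one collision if $\omega(y)=\omega(x)+\omega(y-x)$, or $\omega(x)=\omega(y)+\omega(x-y)$, or $\omega(x+y)=\omega(x)+\omega(y)$. The no-collision region $\mathfrak I$ is the set of $x\in\mathbb T^3$ such that no $y\in\mathbb T^3$ is connected to $x$ by one collision. *)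

From Stdlib Require Import Reals.
Open Scope R_scope.

(* A point of T^3 = R^3/Z^3 is represented by any real lift (k1,k2,k3);
   omega is Z^3-periodic and the collision relations only use sums and
   differences, so every notion below is well defined on the torus. *)
Definition vec3 : Type := (R * R * R)%type.

Definition comp1 (k : vec3) : R := fst (fst k).
Definition comp2 (k : vec3) : R := snd (fst k).
Definition comp3 (k : vec3) : R := snd k.

Definition vadd (x y : vec3) : vec3 := (comp1 x + comp1 y, comp2 x + comp2 y, comp3 x + comp3 y).
Definition vsub (x y : vec3) : vec3 := (comp1 x - comp1 y, comp2 x - comp2 y, comp3 x - comp3 y).

Definition omega (w0 : R) (k : vec3) : R :=
  w0 + (2 * (1 - cos (2 * PI * comp1 k))
        + 2 * (1 - cos (2 * PI * comp2 k))
        + 2 * (1 - cos (2 * PI * comp3 k))).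

Definition connected (w0 : R) (x y : vec3) : Prop :=
  omega w0 y = omega w0 x + omega w0 (vsub y x) \/
  omega w0 x = omega w0 y + omega w0 (vsub x y) \/
  omega w0 (vadd x y) = omega w0 x + omega w0 y.

Definition no_collision (w0 : R) (x : vec3) : Prop :=
  forall y : vec3, ~ connected w0 x y.

Definition zero_or_half_mod1 (t : R) : Prop :=
  exists n : Z, t = IZR n \/ t = IZR n + / 2.

From Stdlib Require Import Reals Lra.
Open Scope R_scope.

(* Writing a_j, b_j for the components of x and y, a direct
   computation gives, for every omega0,
     omega(x) + omega(y) - omega(x+y) = omega0 - 2 * sum_j (D(a_j,b_j) - 1),
   where D(a,b) = cos(2 pi a) + cos(2 pi b) - cos(2 pi (a+b)).  Always
   D <= 3/2, so a collision x + y forces omega0 <= 2 * sum_j (D_j - 1) <= 3.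
   If moreover one of a, b, a+b is 0 or 1/2 mod 1, then that angle has zero
   sine, so D(a,b) <= 1 and the bound improves to omega0 <= 2, which is
   excluded by omega0 > 2.  Each of the three collision relations involving
   the point y is such an additive relation (y = z + (y-z), z = y + (z-y),
   y + z), with y among the three points, which gives the theorem. *)

Lemma sin_zero_or_half (t : R) : zero_or_half_mod1 t -> sin (2 * PI * t) = 0.
Proof.
  intros [n [-> | ->]]; apply sin_eq_0_1.
  - exists (2 * n)%Z. rewrite mult_IZR. ring.
  - exists (2 * n + 1)%Z. rewrite plus_IZR, mult_IZR. field.
Qed.

Lemma cos_shift_at_sin_zero (u x : R) :
  sin u = 0 -> cos u * cos u = 1 /\ cos (u + x) = cos u * cos x.
Proof.
  intros Hs. split.
  - pose proof (sin2_cos2 u) as E. unfold Rsqr in E. rewrite Hs in E. lra.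
  - rewrite cos_plus, Hs. ring.
Qed.

Definition defect (a b : R) : R :=
  cos (2 * PI * a) + cos (2 * PI * b) - cos (2 * PI * (a + b)).

(* Symmetric-sum form: D = 2 cos s cos d - 2 cos^2 s + 1 with s, d the half
   sum and half difference of the angles, a quadratic in cos s with maximum
   (cos^2 d)/2 + 1 <= 3/2. *)
Lemma defect_le_3_2 (a b : R) : defect a b <= 3 / 2.
Proof.
  unfold defect.
  set (s := PI * (a + b)). set (d := PI * (a - b)).
  replace (2 * PI * a) with (s + d) by (unfold s, d; ring).
  replace (2 * PI * b) with (s - d) by (unfold s, d; ring).
  replace (2 * PI * (a + b)) with (2 * s) by (unfold s; ring).
  rewrite cos_plus, cos_minus, cos_2a_cos.
  pose proof (COS_bound d).
  pose proof (pow2_ge_0 (2 * cos s - cos d)).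
  nra.
Qed.

(* If a, b or a + b is 0 or 1/2 mod 1, the defect is at most 1: with c = +-1
   the cosine of the special angle, D equals c + (1 - c) cos(other angle). *)
Lemma defect_le_1 (a b : R) :
  zero_or_half_mod1 a \/ zero_or_half_mod1 b \/ zero_or_half_mod1 (a + b) ->
  defect a b <= 1.
Proof.
  unfold defect.
  pose proof (COS_bound (2 * PI * a)). pose proof (COS_bound (2 * PI * b)).
  pose proof (COS_bound (2 * PI * (a + b))).
  intros [Ha | [Hb | Hab]].
  - destruct (cos_shift_at_sin_zero _ (2 * PI * b) (sin_zero_or_half a Ha))
      as [Hc Hshift].
    replace (2 * PI * (a + b)) with (2 * PI * a + 2 * PI * b) by ring.
    rewrite Hshift. nra.
  - destruct (cos_shift_at_sin_zero _ (2 * PI * a) (sin_zero_or_half b Hb))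
      as [Hc Hshift].
    replace (2 * PI * (a + b)) with (2 * PI * b + 2 * PI * a) by ring.
    rewrite Hshift. nra.
  - destruct (cos_shift_at_sin_zero _ (- (2 * PI * b)) (sin_zero_or_half _ Hab))
      as [Hc Hshift].
    replace (2 * PI * a) with (2 * PI * (a + b) + - (2 * PI * b)) by ring.
    rewrite Hshift, cos_neg. nra.
Qed.

Lemma omega_vadd_balance (w0 : R) (x y : vec3) :
  omega w0 x + omega w0 y - omega w0 (vadd x y)
  = w0 - 2 * (defect (comp1 x) (comp1 y) + defect (comp2 x) (comp2 y)
              + defect (comp3 x) (comp3 y) - 3).
Proof. unfold omega, defect, vadd, comp1, comp2, comp3; simpl. ring. Qed.

Definition on_special_plane (y : vec3) : Prop :=
  zero_or_half_mod1 (comp1 y) \/ zero_or_half_mod1 (comp2 y) \/ zero_or_half_mod1 (comp3 y).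

Lemma no_additive_collision (w0 : R) (x y : vec3) : 2 < w0 ->
  on_special_plane x \/ on_special_plane y \/ on_special_plane (vadd x y) ->
  omega w0 (vadd x y) <> omega w0 x + omega w0 y.
Proof.
  intros Hw Hspecial Hcoll.
  pose proof (omega_vadd_balance w0 x y) as Hbal.
  pose proof (defect_le_3_2 (comp1 x) (comp1 y)).
  pose proof (defect_le_3_2 (comp2 x) (comp2 y)).
  pose proof (defect_le_3_2 (comp3 x) (comp3 y)).
  pose proof (defect_le_1 (comp1 x) (comp1 y)) as D1.
  pose proof (defect_le_1 (comp2 x) (comp2 y)) as D2.
  pose proof (defect_le_1 (comp3 x) (comp3 y)) as D3.
  assert (Hsmall : defect (comp1 x) (comp1 y) <= 1 \/ defect (comp2 x) (comp2 y) <= 1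
                   \/ defect (comp3 x) (comp3 y) <= 1)
    by (unfold on_special_plane in Hspecial; tauto).
  destruct Hsmall as [? | [? | ?]]; lra.
Qed.

Lemma vadd_vsub (x y : vec3) : vadd x (vsub y x) = y.
Proof.
  destruct y as [[y1 y2] y3].
  unfold vadd, vsub, comp1, comp2, comp3; simpl. f_equal; [f_equal |]; ring.
Qed.

Theorem mainTheorem9 (w0 : R) (hw0 : 2 < w0 < 3) (y : vec3) :
  (zero_or_half_mod1 (comp1 y) \/ zero_or_half_mod1 (comp2 y) \/ zero_or_half_mod1 (comp3 y)) ->
  no_collision w0 y.
Proof.
  intros Hy z [Hcoll | [Hcoll | Hcoll]].
  - (* z = y + (z - y) *)
    rewrite <- (vadd_vsub y z) in Hcoll at 1.
    exact (no_additive_collision w0 y (vsub z y) (proj1 hw0) (or_introl Hy) Hcoll).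
  - (* y = z + (y - z) *)
    rewrite <- (vadd_vsub z y) in Hcoll at 1.
    refine (no_additive_collision w0 z (vsub y z) (proj1 hw0) _ Hcoll).
    rewrite vadd_vsub. right; right; exact Hy.
  -
    exact (no_additive_collision w0 y z (proj1 hw0) (or_introl Hy) Hcoll).
Qed.
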